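(* Let $\mathcal{C}=\{C_1,\dots,C_k\}\subset\mathbb{P}^2_{\mathbb{C}}$ be a $d$-arrangement of $k\geq 4$ smooth curves of degree $d$ with $t_2\neq 0$ and $t_r=0$ for all $r>2$. Then the Levi graph $G$ of $\mathcal{C}$ contains an induced cycle of length $2k$.
   Context: A $d$-arrangement is an arrangement $\mathcal{C}=\{C_1,\dots,C_k\}$ of $k\geq 3$ smooth plane curves all of the same degree $d\geq 1$ such that the singular locus $\mathrm{Sing}(\mathcal{C})$ consists only of ordinary intersection points (locally like intersections of lines). For $r\geq 2$, $t_r$ denotes the number of points of $\mathrm{Sing}(\mathcal{C})$ lying on exactly $r$ curves of $\mathcal{C}$. The Levi graph of $\mathcal{C}$ is the bipartite graph with one vertex for each point $p\in\mathrm{Sing}(\mathcal{C})$, one vertex for each curve $C_j$, and an edge between the vertex of $p$ and the vertex of $C_j$ iff $p\in C_j$. *)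

From HB Require Import structures.
From mathcomp Require Import all_boot all_order all_algebra.
From mathcomp Require Import complex.
From mathcomp Require Import Rstruct.
From mathcomp Require Import mpoly.
Set Implicit Arguments. Unset Strict Implicit. Unset Printing Implicit Defensive.
Import GRing.Theory.
Local Open Scope ring_scope.

Notation CC := (complex Rdefinitions.R).

(* Homogeneous coordinates of a point of P^2_C: a vector of C^3 (required nonzero). *)
Definition nonzero3 (x : 'I_3 -> CC) : Prop := exists i, x i != 0.

Definition proj_eq (x y : 'I_3 -> CC) : Prop :=
  exists c : CC, c != 0 /\ forall i, y i = c * x i.

Definition on_curve (F : {mpoly CC[3]}) (x : 'I_3 -> CC) : bool := F.@[x] == 0.

Definition grad (F : {mpoly CC[3]}) (x : 'I_3 -> CC) : 'I_3 -> CC :=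
  fun i => (F^`M(i)).@[x].

Definition smooth_curve (d : nat) (F : {mpoly CC[3]}) : Prop :=
  [/\ F != 0, F \is d.-homog &
      forall x, nonzero3 x -> on_curve F x -> exists i, grad F x i != 0].

Definition lin_indep2 (u v : 'I_3 -> CC) : Prop :=
  forall a b : CC, (forall i, a * u i + b * v i = 0) -> a = 0 /\ b = 0.

Definition in_sing (k : nat) (F : 'I_k -> {mpoly CC[3]}) (x : 'I_3 -> CC) : Prop :=
  [/\ nonzero3 x, on_curve (\prod_(j < k) F j) x &
      forall i, grad (\prod_(j < k) F j) x i = 0].

Definition mult (k : nat) (F : 'I_k -> {mpoly CC[3]}) (x : 'I_3 -> CC) : nat :=
  #|[set j | on_curve (F j) x]|.

(* d-arrangement: k >= 3 smooth curves of degree d >= 1, pairwise distinct,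
   whose singular points are ordinary (the curves through a singular point
   have pairwise distinct tangent lines, i.e. pairwise independent gradients). *)
Definition d_arrangement (k d : nat) (F : 'I_k -> {mpoly CC[3]}) : Prop :=
  [/\ (3 <= k)%N, (1 <= d)%N, forall j, smooth_curve d (F j),
      forall i j, i != j ->
        exists x, nonzero3 x /\ on_curve (F i) x != on_curve (F j) x
    & forall x, in_sing F x -> forall i j, i != j ->
        on_curve (F i) x -> on_curve (F j) x ->
        lin_indep2 (grad (F i) x) (grad (F j) x)].

(* Levi graph: vertices are points of Sing (given by homogeneous coordinates,
   identified up to proportionality) and curves. *)
Inductive levi_vertex (k : nat) : Type :=
  | LPt of ('I_3 -> CC)
  | LCv of 'I_k.

Definition levi_vertex_ok (k : nat) (F : 'I_k -> {mpoly CC[3]}) (v : levi_vertex k) : Prop :=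
  match v with LPt x => in_sing F x | LCv _ => True end.

Definition levi_same (k : nat) (v w : levi_vertex k) : Prop :=
  match v, w with
  | LPt x, LPt y => proj_eq x y
  | LCv i, LCv j => i = j
  | _, _ => False
  end.

Definition levi_adj (k : nat) (F : 'I_k -> {mpoly CC[3]}) (v w : levi_vertex k) : Prop :=
  match v, w with
  | LPt x, LCv j => on_curve (F j) x
  | LCv j, LPt x => on_curve (F j) x
  | _, _ => False
  end.

Definition levi_induced_cycle (k : nat) (F : 'I_k -> {mpoly CC[3]}) (n : nat)
    (v : 'I_n -> levi_vertex k) : Prop :=
  [/\ forall i, levi_vertex_ok F (v i),
      forall i j, levi_same (v i) (v j) -> i = j
    & forall i j : 'I_n,
        levi_adj F (v i) (v j) <->
        ((j : nat) = (i.+1 %% n)%N \/ (i : nat) = (j.+1 %% n)%N)].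

(* Any two plane curves of the same positive degree meet, so for each i the
   curves C_i and C_(i+1 mod k) share a point P_i, which is singular for the
   arrangement.  Since t_r = 0 for r > 2, exactly C_i and C_(i+1) pass through
   P_i; hence C_0, P_0, C_1, P_1, ..., C_(k-1), P_(k-1) is an induced cycle of
   the Levi graph, and the P_i are pairwise distinct because k >= 3.

   That two curves meet is proved with resultants: if F and G do not vanish at
   (0:0:1), view them as polynomials in z over R[x,y] with constant leading
   coefficients; their resultant vanishes at (x,y) = (0,0), hence, over an
   algebraically closed field, at some (a,b) <> (0,0), and then F(a,b,.) and
   G(a,b,.) have a common root c.  If exactly one of F, G vanishes at (0:0:1),
   replacing it by F + G reduces to this case. *)

From HB Require Import structures.
From mathcomp Require Import all_boot all_order all_algebra.
From mathcomp Require Import complex Rstruct mpoly.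
From mathcomp Require Import zify.
Set Implicit Arguments. Unset Strict Implicit. Unset Printing Implicit Defensive.
Import GRing.Theory.

Section DhomogScale.
Local Open Scope ring_scope.
Variables (n : nat) (R : comNzRingType).

Lemma meval_dhomog_scale d (G : {mpoly R[n]}) (c : R) (x : 'I_n -> R) :
  G \is d.-homog -> G.@[fun i => c * x i] = c ^+ d * G.@[x].
Proof.
move=> homG; rewrite !mevalE mulr_sumr !big_seq; apply: eq_bigr => m m_supp.
rewrite (eq_bigr (fun i => c ^+ m i * x i ^+ m i)); last by move=> i _; rewrite exprMn.
by rewrite big_split /= prodrXr -mdegE (dhomog_mf homG m_supp) mulrCA.
Qed.

Lemma meval_dhomog_at0 d (G : {mpoly R[n]}) :
  (0 < d)%N -> G \is d.-homog -> G.@[fun _ => 0] = 0.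
Proof.
move=> d_gt0 homG; rewrite -(meval_eq _ (fun i => mul0r (0 : R))).
by rewrite (meval_dhomog_scale _ _ homG) expr0n (gtn_eqF d_gt0) mul0r.
Qed.

End DhomogScale.

Local Notation i0 := (@Ordinal 3 0 isT).
Local Notation i1 := (@Ordinal 3 1 isT).
Local Notation i2 := (@Ordinal 3 2 isT).

Lemma big_ord3 (R : Type) (idx : R) (op : Monoid.law idx) (f : 'I_3 -> R) :
  \big[op/idx]_(i < 3) f i = op (op (f i0) (f i1)) (f i2).
Proof.
rewrite !big_ord_recl big_ord0 Monoid.mulm1 Monoid.mulmA.
by congr (op (op (f _) (f _)) (f _)); apply: val_inj.
Qed.

Section PlaneCurvesMeet.
Local Open Scope ring_scope.
Variable R : closedFieldType.
Local Notation bipoly := {poly {poly R}}.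

Definition pt3 (a b c : R) : 'I_3 -> R := fun i => nth 0 [:: a; b; c] i.

Definition eval2 (a b : R) : {rmorphism bipoly -> R} :=
  (horner_eval b \o horner_eval a%:P)%FUN.

Lemma eval2E a b r : eval2 a b r = r.[a%:P].[b]. Proof. by []. Qed.

Lemma eval2C a b c : eval2 a b c%:P%:P = c.
Proof. by rewrite eval2E !hornerC. Qed.

Lemma eval2X a b : eval2 a b 'X = a.
Proof. by rewrite eval2E hornerX hornerC. Qed.

Lemma eval2Y a b : eval2 a b 'X%:P = b.
Proof. by rewrite eval2E hornerC hornerX. Qed.

(* [zpoly F] is F(x, y, z) as a polynomial in z over R[x][y]; [eval2 a b]
   substitutes x := a, y := b. *)
Definition zvar : 'I_3 -> {poly bipoly} :=
  fun i => nth 0 [:: ('X : bipoly)%:P; ('X%:P : bipoly)%:P; 'X] i.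

Definition zpoly (F : {mpoly R[3]}) : {poly bipoly} :=
  mmap (fun c : R => c%:P%:P%:P) zvar F.

Lemma horner_zpoly F a b c :
  (map_poly (eval2 a b) (zpoly F)).[c] = F.@[pt3 a b c].
Proof.
rewrite /zpoly /mmap mevalE rmorph_sum horner_sum; apply: eq_bigr => m _.
rewrite rmorphM hornerM /= map_polyC hornerC; congr (_ * _); first exact: eval2C.
rewrite /mmap1 rmorph_prod horner_prod; apply: eq_bigr => i _.
rewrite rmorphXn horner_exp; congr (_ ^+ _).
case: i => [[|[|[|//]]] ?]; rewrite /zvar /pt3 /=.
- by rewrite map_polyC hornerC; apply: eval2X.
- by rewrite map_polyC hornerC; apply: eval2Y.
- by rewrite map_polyX hornerX.
Qed.

Definition xy_monomial (m : 'X_{1..3}) : bipoly := 'X ^+ m i0 * ('X%:P) ^+ m i1.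

Lemma coef_zpoly F j :
  (zpoly F)`_j = \sum_(m <- msupp F) (F@_m)%:P%:P * xy_monomial m * (j == m i2)%:R.
Proof.
rewrite /zpoly /mmap coef_sum; apply: eq_bigr => m _.
rewrite /mmap1 big_ord3 /zvar /=.
by rewrite mulrA -[_ ^+ m i0]rmorphXn -[_ ^+ m i1]rmorphXn -!rmorphM coefCM coefXn.
Qed.

Lemma meval_e2 F :
  F.@[pt3 0 0 1] = \sum_(m <- msupp F) F@_m * ((m i0 == 0%N) && (m i1 == 0%N))%:R.
Proof.
rewrite mevalE; apply: eq_bigr => m _; rewrite big_ord3 /pt3 /= !expr0n expr1n mulr1.
by case: (m i0 == 0%N); case: (m i1 == 0%N); rewrite ?mulr1 ?mulr0.
Qed.

Section Dhomog.
Variables (d : nat) (F : {mpoly R[3]}).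
Hypothesis homF : F \is d.-homog.

Let mdeg_supp m : m \in msupp F -> (m i0 + m i1 + m i2)%N = d.
Proof. by move=> m_supp; rewrite -(dhomog_mf homF m_supp) /= mdegE big_ord3. Qed.

Lemma size_zpoly_dhomog : (size (zpoly F) <= d.+1)%N.
Proof.
apply/leq_sizeP => j d_lt_j; rewrite coef_zpoly big_seq big1 // => m m_supp.
have := mdeg_supp m_supp; case: (j =P m i2) => [j_eq|_] deg; [lia | by rewrite mulr0].
Qed.

Lemma coef_zpoly_dhomog : (zpoly F)`_d = (F.@[pt3 0 0 1])%:P%:P.
Proof.
rewrite coef_zpoly meval_e2 !rmorph_sum !big_seq; apply: eq_bigr => m m_supp.
have := mdeg_supp m_supp; rewrite !rmorphM /= /xy_monomial.
case: (eqVneq (m i0) 0%N) => [-> | m0]; case: (eqVneq (m i1) 0%N) => [-> | m1] /=.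
- by rewrite !add0n => ->; rewrite !expr0 mulr1 eqxx !polyC1 !mulr1.
all: by rewrite !polyC0 mulr0; case: (d =P m i2) => [d_eq|_] deg; [lia | rewrite mulr0].
Qed.

Lemma lead_coef_zpoly_dhomog : F.@[pt3 0 0 1] != 0 ->
  lead_coef (zpoly F) = (F.@[pt3 0 0 1])%:P%:P.
Proof.
move=> Fe2_neq0; rewrite lead_coefE -coef_zpoly_dhomog; congr _`_ _.
have d_lt_size : (d < size (zpoly F))%N.
  rewrite ltnNge; apply: contra Fe2_neq0 => /(nth_default 0).
  by rewrite coef_zpoly_dhomog => /eqP; rewrite !polyC_eq0.
by have := size_zpoly_dhomog; lia.
Qed.

End Dhomog.

Lemma bipoly_root_off_origin (r : bipoly) :
  eval2 0 0 r = 0 -> exists a b, ((a != 0) || (b != 0)) /\ eval2 a b r = 0.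
Proof.
move=> r00; have [/size1_polyC r_const | r_nonconst] := leqP (size r) 1.
  by exists 1, 0; rewrite oner_neq0; move: r00; rewrite !eval2E r_const !hornerC.
have r_neq0 : r != 0 by rewrite -size_poly_gt0 ltnW.
(* Pick b <> 0 off the roots of the leading coefficient: then r(x, b) keeps
   positive degree in x, hence has a root a. *)
have : lead_coef r * 'X != 0 by rewrite mulf_neq0 ?polyX_eq0 ?lead_coef_eq0.
case/closed_nonrootP => b; rewrite /root hornerMX mulf_eq0 negb_or.
case/andP => lead_b b_neq0.
have : size (map_poly (horner_eval b) r) != 1%N.
  by rewrite size_map_poly_id0 // neq_ltn r_nonconst orbT.
case/closed_rootP => a /eqP ra; exists a, b; split; first by rewrite b_neq0 orbT.
have -> : eval2 a b r = (map_poly (horner_eval b) r).[horner_eval b a%:P].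
  by rewrite horner_map.
by rewrite horner_evalE hornerC ra.
Qed.

Lemma dhomog_common_zero_off_e2 d (F G : {mpoly R[3]}) :
  (0 < d)%N -> F \is d.-homog -> G \is d.-homog ->
  F.@[pt3 0 0 1] != 0 -> G.@[pt3 0 0 1] != 0 ->
  exists a b c, ((a != 0) || (b != 0)) /\ F.@[pt3 a b c] = 0 /\ G.@[pt3 a b c] = 0.
Proof.
move=> d_gt0 homF homG Fe2 Ge2.
have lead_nz H a b : H \is d.-homog -> H.@[pt3 0 0 1] != 0 ->
    eval2 a b (lead_coef (zpoly H)) != 0.
  by move=> homH He2; rewrite (lead_coef_zpoly_dhomog homH He2) eval2C.
have eval2_res a b : eval2 a b (resultant (zpoly F) (zpoly G)) =
    resultant (map_poly (eval2 a b) (zpoly F)) (map_poly (eval2 a b) (zpoly G)).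
  by apply: map_resultant; apply: lead_nz.
have pt3_000 : pt3 0 0 0 =1 (fun _ => 0) by case=> [[|[|[|]]]].
have : eval2 0 0 (resultant (zpoly F) (zpoly G)) = 0.
  rewrite eval2_res; apply/eqP; rewrite resultant_eq0; apply: (@root_size_gt1 _ 0).
    by rewrite gcdp_eq0 negb_and -lead_coef_eq0 lead_coef_map_eq lead_nz.
  rewrite root_gcd /root !horner_zpoly !(meval_eq _ pt3_000).
  by rewrite !(meval_dhomog_at0 d_gt0) ?eqxx.
case/bipoly_root_off_origin => a [b [ab_nz]]; rewrite eval2_res => /eqP.
rewrite resultant_eq0 => /gtn_eqF/negbT/closed_rootP [c].
by rewrite root_gcd /root !horner_zpoly => /andP [/eqP Fc /eqP Gc]; exists a, b, c.
Qed.

Lemma dhomog_common_zero d (F G : {mpoly R[3]}) :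
  (0 < d)%N -> F \is d.-homog -> G \is d.-homog ->
  exists x : 'I_3 -> R, (exists i, x i != 0) /\ F.@[x] = 0 /\ G.@[x] = 0.
Proof.
move=> d_gt0 homF homG.
have off_e2 F' G' : F' \is d.-homog -> G' \is d.-homog ->
    F'.@[pt3 0 0 1] != 0 -> G'.@[pt3 0 0 1] != 0 ->
    exists x : 'I_3 -> R, (exists i, x i != 0) /\ F'.@[x] = 0 /\ G'.@[x] = 0.
  move=> homF' homG' F'e2 G'e2.
  have [a [b [c [ab_nz zeros]]]] := dhomog_common_zero_off_e2 d_gt0 homF' homG' F'e2 G'e2.
  by exists (pt3 a b c); split=> //; case/orP: ab_nz; [exists i0 | exists i1].
have [Fe2|Fe2] := eqVneq F.@[pt3 0 0 1] 0; have [Ge2|Ge2] := eqVneq G.@[pt3 0 0 1] 0.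
- by exists (pt3 0 0 1); split=> //; exists i2; rewrite oner_neq0.
- have FGe2 : (F + G).@[pt3 0 0 1] != 0 by rewrite mevalD Fe2 add0r.
  have [x [x_nz [FGx Gx]]] := off_e2 _ _ (dhomogD homF homG) homG FGe2 Ge2.
  by exists x; split=> //; split=> //; move: FGx; rewrite mevalD Gx addr0.
- have GFe2 : (G + F).@[pt3 0 0 1] != 0 by rewrite mevalD Ge2 add0r.
  have [x [x_nz [Fx GFx]]] := off_e2 _ _ homF (dhomogD homG homF) Fe2 GFe2.
  by exists x; split=> //; split=> //; move: GFx; rewrite mevalD Fx addr0.
- exact: off_e2.
Qed.

End PlaneCurvesMeet.

Lemma iter_ordS_val k m (i : 'I_k) : iter m (@ordS k) i = (i + m) %% k :> nat.
Proof.
elim: m => [|m IHm] /=; first by rewrite addn0 modn_small.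
by rewrite IHm -addn1 modnDml -addnA addn1.
Qed.

Lemma iter_ordS_eq k m (i : 'I_k) : (iter m (@ordS k) i == i) = (k %| m).
Proof.
rewrite -val_eqE /= iter_ordS_val -[X in _ == X](modn_small (ltn_ord i)).
by rewrite -[X in _ == X %% k]addn0 eqn_modDl mod0n.
Qed.

Lemma ordS_neq k (i : 'I_k) : 1 < k -> ordS i != i.
Proof.
by move=> k_gt1; rewrite -[ordS i]/(iter 1 (@ordS k) i) iter_ordS_eq dvdn1 gtn_eqF.
Qed.

Lemma ordS2_neq k (i : 'I_k) : 2 < k -> ordS (ordS i) != i.
Proof.
move=> k_gt2; rewrite -[ordS _]/(iter 2 (@ordS k) i) iter_ordS_eq.
by apply: contraTN k_gt2 => /dvdn_leq; rewrite -leqNgt; apply.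
Qed.

Lemma half_ord_subproof k (n : 'I_(2 * k)) : n./2 < k.
Proof. by rewrite ltn_half_double -mul2n. Qed.

Definition half_ord k (n : 'I_(2 * k)) : 'I_k := Ordinal (half_ord_subproof n).

Lemma ord_double_inj k (a b : 'I_(2 * k)) :
  odd a = odd b -> half_ord a = half_ord b -> a = b.
Proof.
move=> odd_ab /(congr1 val) /= half_ab; apply: val_inj => /=.
by rewrite -[val a]odd_double_half odd_ab half_ab odd_double_half.
Qed.

Lemma odd_ordS_double k (n : 'I_(2 * k)) : odd (ordS n) = ~~ odd n.
Proof.
have := ltn_ord n; rewrite /= leq_eqVlt => /orP [/eqP n_last | n_small].
  by rewrite n_last modnn; move/(congr1 odd): n_last; rewrite /= oddM => ->.
by rewrite modn_small.
Qed.

Lemma half_ordS_double k (n : 'I_(2 * k)) :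
  half_ord (ordS n) = if odd n then ordS (half_ord n) else half_ord n.
Proof.
have n_eq := odd_double_half n; apply: val_inj; rewrite fun_if /=.
have := ltn_ord n; rewrite leq_eqVlt => /orP [/eqP n_last | n_small].
  have odd_n : odd n by move/(congr1 odd): n_last; rewrite /= oddM => /negbFE.
  rewrite n_last modnn odd_n in n_eq *; rewrite (_ : (n./2).+1 = k) ?modnn //; lia.
rewrite modn_small // -uphalfE uphalf_half.
case: (odd n) n_eq => n_eq; rewrite ?modn_small //; lia.
Qed.

Lemma eq_ordS_double k (a b : 'I_(2 * k)) : odd b = ~~ odd a ->
  b = ordS a <-> half_ord b = if odd a then ordS (half_ord a) else half_ord a.
Proof.
move=> odd_b; rewrite -half_ordS_double; split=> [-> // | half_b].
by apply: ord_double_inj; rewrite ?odd_ordS_double.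
Qed.

Lemma on_curve_proj_eq d (G : {mpoly CC[3]}) x y :
  G \is d.-homog -> proj_eq x y -> on_curve G y = on_curve G x.
Proof.
move=> homG [c [c_neq0 y_eq]]; rewrite /on_curve (meval_eq _ y_eq).
by rewrite (meval_dhomog_scale _ _ homG) mulf_eq0 expf_eq0 (negPf c_neq0) andbF.
Qed.

Section Arrangement.
Local Open Scope ring_scope.
Variables (k : nat) (F : 'I_k -> {mpoly CC[3]}).

Lemma in_sing_two_curves i j x : i != j -> nonzero3 x ->
  on_curve (F i) x -> on_curve (F j) x -> in_sing F x.
Proof.
move=> ij x_nz /eqP Fix /eqP Fjx.
have prodE : \prod_(l < k) F l = F i * (F j * \prod_(l < k | (l != i) && (l != j)) F l).
  by rewrite (bigD1 i) //= (bigD1 j) 1?eq_sym.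
split=> // [|l]; first by rewrite /on_curve prodE mevalM Fix mul0r.
by rewrite /grad prodE !mderivM !mevalD !mevalM Fix Fjx !mul0r !mulr0 !addr0.
Qed.

Lemma on_curve_mult_le2 x i j l : (mult F x <= 2)%N -> i != j ->
  on_curve (F i) x -> on_curve (F j) x -> on_curve (F l) x -> l = i \/ l = j.
Proof.
move=> mult_le2 ij Fix Fjx Flx.
have [-> | li] := eqVneq l i; first by left.
have [-> | lj] := eqVneq l j; first by right.
have : l |: [set i; j] \subset [set j0 | on_curve (F j0) x].
  by apply/subsetP => y; rewrite !inE => /or3P [] /eqP ->.
move/subset_leq_card; rewrite cardsU1 cards2 ij !inE negb_or li lj.
by move: mult_le2; rewrite /mult; lia.
Qed.

End Arrangement.

Definition levi_cycle k (P : 'I_k -> 'I_3 -> CC) (n : 'I_(2 * k)) : levi_vertex k :=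
  if odd n then @LPt k (P (half_ord n)) else LCv (half_ord n).

Section LeviCycle.
Variables (k d : nat) (F : 'I_k -> {mpoly CC[3]}) (P : 'I_k -> 'I_3 -> CC).
Hypotheses (k_gt2 : 2 < k) (homF : forall j, F j \is d.-homog).
Hypothesis P_sing : forall p, in_sing F (P p).
Hypothesis curves_through_P : forall p q, on_curve (F q) (P p) <-> q = p \/ q = ordS p.

Lemma proj_eq_levi_points p q : proj_eq (P p) (P q) -> p = q.
Proof.
move=> Ppq; have on_q j : on_curve (F j) (P q) <-> on_curve (F j) (P p).
  by rewrite (on_curve_proj_eq (homF j) Ppq).
have [[// | p_eq]] : (p = q \/ p = ordS q) /\ (ordS p = q \/ ordS p = ordS q).
  by split; apply/curves_through_P/on_q/curves_through_P; [left | right].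
rewrite p_eq => -[] /eqP; first by rewrite (negPf (ordS2_neq _ k_gt2)).
by rewrite (inj_eq (@ordS_inj k)) (negPf (ordS_neq _ (ltnW k_gt2))).
Qed.

Lemma levi_adj_cycle a b :
  levi_adj F (levi_cycle P a) (levi_cycle P b) <-> b = ordS a \/ a = ordS b.
Proof.
have parity_flip : odd a = odd b -> ~ (b = ordS a \/ a = ordS b).
  by move=> odd_ab [] ab; move: odd_ab; rewrite ab odd_ordS_double; case: odd.
rewrite /levi_cycle; case odd_a: (odd a); case odd_b: (odd b) => /=;
  try by split=> // /parity_flip; rewrite odd_a odd_b; apply.
all: rewrite curves_through_P (eq_ordS_double (a := a)) ?(eq_ordS_double (a := b));
  rewrite ?odd_a ?odd_b //.
all: by split=> -[] ->; auto.
Qed.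

Lemma levi_cycle_induced : levi_induced_cycle F (levi_cycle P).
Proof.
split=> [n | a b | a b].
- by rewrite /levi_cycle; case: ifP => // _; apply: P_sing.
- rewrite /levi_cycle; case odd_a: (odd a); case odd_b: (odd b) => //=.
    by move/proj_eq_levi_points => half_ab; apply: ord_double_inj; rewrite ?odd_a ?odd_b.
  by move=> half_ab; apply: ord_double_inj; rewrite ?odd_a ?odd_b.
- have val_ordS (x y : 'I_(2 * k)) : val y = (x.+1 %% (2 * k))%N <-> y = ordS x.
    by split=> [y_eq | ->] //; apply: val_inj.
  by rewrite levi_adj_cycle !val_ordS.
Qed.

End LeviCycle.

Theorem theorem5p3 (k d : nat) (F : 'I_k -> {mpoly CC[3]}) :
  4 <= k ->
  d_arrangement d F ->
  (* t_2 <> 0 *)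
  (exists x, in_sing F x /\ mult F x = 2) ->
  (* t_r = 0 for all r > 2 *)
  (forall x, in_sing F x -> mult F x <= 2) ->
  exists v : 'I_(2 * k) -> levi_vertex k, levi_induced_cycle F v.
Proof.
move=> k_ge4 [_ d_gt0 smoothF _ _] _ mult_le2.
have homF j : F j \is d.-homog by case: (smoothF j).
have ordS_neq_k (i : 'I_k) : i != ordS i by rewrite eq_sym ordS_neq //; lia.
have /fin_all_exists [P P_meets] : forall i : 'I_k, exists x : 'I_3 -> CC,
    [/\ in_sing F x, on_curve (F i) x & on_curve (F (ordS i)) x].
  move=> i.
  have [x [x_nz [/eqP Fix /eqP FSix]]] :=
    dhomog_common_zero d_gt0 (homF i) (homF (ordS i)).
  by exists x; split=> //; apply: in_sing_two_curves (ordS_neq_k i) x_nz Fix FSix.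
exists (levi_cycle P); apply: (levi_cycle_induced _ homF) => [| p | p q]; first lia.
- by case: (P_meets p).
- have [P_sing Fp FSp] := P_meets p; split=> [Fq | [] ->] //.
  exact: on_curve_mult_le2 (mult_le2 _ P_sing) (ordS_neq_k p) Fp FSp Fq.
Qed.
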